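(* Let $g',g''\in G$ and let $(\xi''_i,\xi'_i)\in A_{g''}\times A_{g'}$, $i=1,2$, be composable pairs. Then $$\varpi_{g''g'}\big(\xi''_1*\xi'_1,\ \xi''_2*\xi'_2\big)=\varpi_{g''}(\xi''_1,\xi''_2)+\varpi_{g'}(\xi'_1,\xi'_2)-\lambda\big((X''_1,X'_1),(X''_2,X'_2)\big),$$ where $X''_i=\mathsf a(\xi''_i)\in T_{g''}G$, $X'_i=\mathsf a(\xi'_i)\in T_{g'}G$, and $\lambda=\tfrac12\,\mathrm{pr}_1^*\theta^L\cdot\mathrm{pr}_2^*\theta^R\in\Omega^2(G\times G)$ with $\mathrm{pr}_1(g'',g')=g''$, $\mathrm{pr}_2(g'',g')=g'$. That is, on $A^{[2]}$ one has $\mathrm{mult}_A^!\varpi=\mathrm{pr}_1^!\varpi+\mathrm{pr}_2^!\varpi-\lambda$.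
   Context: Let $G$ be a Lie group with Lie algebra $\mathfrak g$ carrying an $\mathrm{Ad}$-invariant symmetric bilinear form $\cdot$, $\theta^L=g^{-1}\mathrm dg$, $\theta^R=\mathrm dg\,g^{-1}$; for 1-forms $\alpha,\beta$ with values in $\mathfrak g$, $(\alpha\cdot\beta)(Y_1,Y_2)=\alpha(Y_1)\cdot\beta(Y_2)-\alpha(Y_2)\cdot\beta(Y_1)$. $A_g$ is the space of $\xi\in C^\infty(\mathbb R,\mathfrak g)$ with $\xi(t+1)=\mathrm{Ad}_g\xi(t)+v_\xi$ for a constant $v_\xi\in\mathfrak g$; the anchor $\mathsf a(\xi)\in T_gG$ is determined by $\theta^R(\mathsf a(\xi))=v_\xi$. The 2-form $\varpi$ on $A$ is $\varpi_g(\xi,\zeta)=\int_0^1\dot\xi\cdot\zeta\,dt-\mathrm{Ad}_g(\xi(0))\cdot v_\zeta-\tfrac12v_\xi\cdot v_\zeta$. A pair $(\xi'',\xi')\in A_{g''}\times A_{g'}$ is composable if $\xi'(1)=\xi''(0)$ and the concatenation $\xi''*\xi'$ is smooth, where $(\xi''*\xi')(t)=\xi'(2t)$ for $0\le t\le\tfrac12$, $=\xi''(2t-1)$ for $\tfrac12\le t\le1$, extended to all $t$ by $(\xi''*\xi')(t+1)=\mathrm{Ad}_{g''g'}(\xi''*\xi')(t)+\mathrm{Ad}_{g''}v_{\xi'}+v_{\xi''}$; then $\xi''*\xi'\in A_{g''g'}$. $A^{[2]}\subset A\times A$ is the bundle of composable pairs and $\mathrm{mult}_A(\xi'',\xi')=\xi''*\xi'$.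 *)

From Stdlib Require Import Reals Lra ClassicalEpsilon.
Open Scope R_scope.

(** The Lie algebra g is modelled in coordinates: g = R^n, an element being a
    function nat -> R of which only the indices i < n are relevant. *)
Definition vec := nat -> R.

Fixpoint rsum (n : nat) (f : nat -> R) : R :=
  match n with O => 0 | S k => rsum k f + f k end.

Definition matvec (n : nat) (M : nat -> nat -> R) (u : vec) : vec :=
  fun i => rsum n (fun j => M i j * u j).

Definition dot (n : nat) (Bm : nat -> nat -> R) (u w : vec) : R :=
  rsum n (fun i => rsum n (fun j => Bm i j * u i * w j)).

(** Abstract Lie group data: a group, its adjoint representation on g = R^n,
    tangent spaces T_g G and the left/right Maurer-Cartan forms
    theta^L_g, theta^R_g : T_g G -> g, with theta^R_g = Ad_g o theta^L_g and
    theta^R_g a bijection T_g G -> g. *)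
Record LieGroup (n : nat) := {
  carrier :> Type;
  gmul : carrier -> carrier -> carrier;
  gone : carrier;
  ginv : carrier -> carrier;
  gmulA : forall a b c, gmul a (gmul b c) = gmul (gmul a b) c;
  gmul1 : forall a, gmul gone a = a /\ gmul a gone = a;
  gmulV : forall a, gmul (ginv a) a = gone /\ gmul a (ginv a) = gone;
  Ad : carrier -> nat -> nat -> R;
  Ad_one : forall u i, (i < n)%nat -> matvec n (Ad gone) u i = u i;
  Ad_mul : forall a b u i, (i < n)%nat ->
      matvec n (Ad (gmul a b)) u i = matvec n (Ad a) (matvec n (Ad b) u) i;
  Tan : carrier -> Type;
  thetaL : forall g, Tan g -> vec;
  thetaR : forall g, Tan g -> vec;
  thetaR_Ad : forall g (X : Tan g) i, (i < n)%nat ->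
      thetaR g X i = matvec n (Ad g) (thetaL g X) i;
  thetaR_surj : forall g (v : vec), exists X : Tan g,
      forall i, (i < n)%nat -> thetaR g X i = v i;
  thetaR_inj : forall g (X Y : Tan g),
      (forall i, (i < n)%nat -> thetaR g X i = thetaR g Y i) -> X = Y
}.
Arguments gmul {n} _ _ _.
Arguments Ad {n} _ _ _ _.
Arguments Tan {n} _ _.
Arguments thetaL {n} _ _ _ _.
Arguments thetaR {n} _ _ _ _.

Definition invariant_form (n : nat) (G : LieGroup n) (Bm : nat -> nat -> R) : Prop :=
  (forall i j, (i < n)%nat -> (j < n)%nat -> Bm i j = Bm j i) /\
  (forall (g : G) u w,
      dot n Bm (matvec n (Ad G g) u) (matvec n (Ad G g) w) = dot n Bm u w).

Definition smooth (f : R -> R) : Prop :=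
  exists D : nat -> R -> R, (forall t, D O t = f t) /\
    forall k t, derivable_pt_lim (D k) t (D (S k) t).

Definition smooth_curve (n : nat) (xi : R -> vec) : Prop :=
  forall i, (i < n)%nat -> smooth (fun t => xi t i).

Definition deriv (f : R -> R) (t : R) : R :=
  match excluded_middle_informative (exists l, derivable_pt_lim f t l) with
  | left H => proj1_sig (constructive_indefinite_description _ H)
  | right _ => 0
  end.

Definition dcurve (xi : R -> vec) : R -> vec := fun t i => deriv (fun s => xi s i) t.

(** Riemann integral (chosen classically; 0 if not integrable) *)
Definition Rint (f : R -> R) (a b : R) : R :=
  match excluded_middle_informative
          (exists _ : Riemann_integrable f a b, True) with
  | left H => RiemannInt (proj1_sig (constructive_indefinite_description _ H))
  | right _ => 0
  end.

Definition vxi (n : nat) (G : LieGroup n) (g : G) (xi : R -> vec) : vec :=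
  fun i => xi 1 i - matvec n (Ad G g) (xi 0) i.

Definition InA (n : nat) (G : LieGroup n) (g : G) (xi : R -> vec) : Prop :=
  smooth_curve n xi /\
  forall t i, (i < n)%nat -> xi (t + 1) i = matvec n (Ad G g) (xi t) i + vxi n G g xi i.

(** anchor: X = a(xi) in T_g G, i.e. theta^R(X) = v_xi *)
Definition is_anchor (n : nat) (G : LieGroup n) (g : G) (xi : R -> vec) (X : Tan G g) : Prop :=
  forall i, (i < n)%nat -> thetaR G g X i = vxi n G g xi i.

Definition varpi (n : nat) (G : LieGroup n) (Bm : nat -> nat -> R) (g : G)
    (xi zeta : R -> vec) : R :=
  Rint (fun t => dot n Bm (dcurve xi t) (zeta t)) 0 1
  - dot n Bm (matvec n (Ad G g) (xi 0)) (vxi n G g zeta)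
  - / 2 * dot n Bm (vxi n G g xi) (vxi n G g zeta).

Definition is_concat (n : nat) (G : LieGroup n) (g2 g1 : G)
    (xi2 xi1 zeta : R -> vec) : Prop :=
  InA n G g2 xi2 /\ InA n G g1 xi1 /\
  (forall i, (i < n)%nat -> xi1 1 i = xi2 0 i) /\
  smooth_curve n zeta /\
  (forall t i, (i < n)%nat -> 0 <= t <= / 2 -> zeta t i = xi1 (2 * t) i) /\
  (forall t i, (i < n)%nat -> / 2 <= t <= 1 -> zeta t i = xi2 (2 * t - 1) i) /\
  (forall t i, (i < n)%nat ->
     zeta (t + 1) i = matvec n (Ad G (gmul G g2 g1)) (zeta t) i
                      + matvec n (Ad G g2) (vxi n G g1 xi1) i + vxi n G g2 xi2 i).

Definition lam (n : nat) (G : LieGroup n) (Bm : nat -> nat -> R) (g2 g1 : G)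
    (X2a : Tan G g2) (X1a : Tan G g1) (X2b : Tan G g2) (X1b : Tan G g1) : R :=
  / 2 * (dot n Bm (thetaL G g2 X2a) (thetaR G g1 X1b)
         - dot n Bm (thetaL G g2 X2b) (thetaR G g1 X1a)).

(** The 2-form varpi_g(xi, zeta) is the sum of an integral term
    int_0^1 xi'.zeta dt and a boundary term depending only on xi(0), v_xi and
    v_zeta.  The proof treats the two parts separately.

    - Integral part: the concatenation zeta = xi'' * xi' runs through xi' on
      [0,1/2] and through xi'' on [1/2,1] at double speed, so splitting
      [0,1] at 1/2 and substituting s = 2t (resp. s = 2t - 1) shows that the
      integral term of zeta_1, zeta_2 is the sum of those of the two factors.
      This needs a few facts of real analysis (derivative of a smooth
      function, fundamental theorem of calculus, affine substitution).
    - Boundary part: from zeta(0) = xi'(0), zeta(1) = xi''(1) and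
      xi'(1) = xi''(0) one gets v_zeta = v_xi'' + Ad_g'' v_xi' and
      Ad_{g''g'} zeta(0) = Ad_g'' (xi''(0) - v_xi'); expanding the bilinear
      form and using its Ad-invariance, the boundary term of zeta differs from
      the sum of those of the factors exactly by lambda, which in turn is
      rewritten through the anchors using theta^R_g = Ad_g theta^L_g. *)

From Stdlib Require Import Reals Lra Lia ClassicalEpsilon FunctionalExtensionality.
Open Scope R_scope.

Lemma deriv_unique (f : R -> R) (t l : R) :
  derivable_pt_lim f t l -> deriv f t = l.
Proof.
  intro Hl. unfold deriv.
  destruct (excluded_middle_informative _) as [E|E].
  - destruct (constructive_indefinite_description _ E) as [l' Hl']; simpl.
    eapply uniqueness_limite; eauto.
  - exfalso; apply E; eauto.
Qed.

Lemma smooth_derivative (f : R -> R) : smooth f ->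
  (forall t, derivable_pt_lim f t (deriv f t)) /\
  continuity (fun t => deriv f t) /\ continuity f.
Proof.
  intros [D [HD0 HD]].
  assert (Ef : f = D O) by (apply functional_extensionality; intro; rewrite HD0; auto).
  assert (Hderiv : forall t, deriv f t = D 1%nat t).
  { intro t. apply deriv_unique. rewrite Ef. apply HD. }
  split; [|split].
  - intro t. rewrite Hderiv, Ef. apply HD.
  - intro t. replace (fun t => deriv f t) with (D 1%nat)
      by (apply functional_extensionality; intro; rewrite Hderiv; auto).
    apply derivable_continuous_pt. exists (D 2%nat t). apply HD.
  - intro t. rewrite Ef. apply derivable_continuous_pt. exists (D 1%nat t). apply HD.
Qed.

Lemma Rint_RiemannInt (f : R -> R) (a b : R) (pr : Riemann_integrable f a b) :
  Rint f a b = RiemannInt pr.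
Proof.
  unfold Rint. destruct (excluded_middle_informative _) as [E|E].
  - apply RiemannInt_P5.
  - exfalso; apply E; exists pr; auto.
Qed.

Lemma RiemannInt_antiderivative (f F : R -> R) (a b : R)
  (pr : Riemann_integrable f a b) : a <= b ->
  (forall x, a <= x <= b -> continuity_pt f x) ->
  (forall x, a <= x <= b -> derivable_pt_lim F x (f x)) ->
  RiemannInt pr = F b - F a.
Proof.
  intros hab Hcont HF.
  rewrite (RiemannInt_P20 hab (FTC_P1 hab Hcont) pr).
  assert (Hprim := RiemannInt_P29 hab Hcont).
  assert (HantiF : antiderivative f F a b).
  { split; auto. intros x Hx. exists (exist _ (f x) (HF x Hx)). reflexivity. }
  destruct (antiderivative_Ucte _ _ _ _ _ Hprim HantiF) as [c Hc].
  rewrite (Hc b), (Hc a) by lra. ring.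
Qed.

Lemma derivable_pt_lim_affine (c d x : R) :
  derivable_pt_lim (fun t => c * t + d) x c.
Proof.
  pose proof (derivable_pt_lim_plus (mult_real_fct c id) (fun _ => d) x (c * 1) 0
    (derivable_pt_lim_scal id c x 1 (derivable_pt_lim_id x))
    (derivable_pt_lim_const d x)) as Hl.
  rewrite Rmult_1_r, Rplus_0_r in Hl. exact Hl.
Qed.

Lemma continuity_affine_reparam (h : R -> R) (c d : R) :
  continuity h -> continuity (fun t => c * h (c * t + d)).
Proof.
  intros Hh. apply (continuity_mult (fun _ => c) (fun t => h (c * t + d))).
  - apply continuity_const; intros ? ?; auto.
  - intro x. apply (continuity_pt_comp (fun t => c * t + d) h).
    + apply derivable_continuous_pt. exists c. apply derivable_pt_lim_affine.
    + apply Hh.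
Qed.

Lemma RiemannInt_affine_subst (h : R -> R) (c d a b A B : R)
  (pr1 : Riemann_integrable (fun t => c * h (c * t + d)) a b)
  (pr2 : Riemann_integrable h A B) :
  A = c * a + d -> B = c * b + d ->
  continuity h -> a <= b -> 0 < c -> RiemannInt pr1 = RiemannInt pr2.
Proof.
  intros -> -> Hh hab hc.
  assert (hAB : c * a + d <= c * b + d) by nra.
  assert (Hcont : forall x, c * a + d <= x <= c * b + d -> continuity_pt h x) by auto.
  set (P := primitive hAB (FTC_P1 hAB Hcont)).
  rewrite (RiemannInt_P20 hAB (FTC_P1 hAB Hcont) pr2).
  rewrite (RiemannInt_antiderivative _ (fun t => P (c * t + d)) a b pr1 hab).
  - reflexivity.
  - intros x _. apply (continuity_affine_reparam h c d Hh).
  - intros x Hx. replace (c * h (c * x + d)) with (h (c * x + d) * c) by ring.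
    apply (derivable_pt_lim_comp (fun t => c * t + d) P).
    + apply derivable_pt_lim_affine.
    + apply RiemannInt_P28. nra.
Qed.

Lemma rsum_ext (n : nat) (f g : nat -> R) :
  (forall k, (k < n)%nat -> f k = g k) -> rsum n f = rsum n g.
Proof.
  induction n as [|n IH]; simpl; intros Hfg; auto.
  rewrite IH by (intros; apply Hfg; lia). rewrite Hfg by lia. auto.
Qed.

Lemma rsum_add (n : nat) (f g : nat -> R) :
  rsum n (fun k => f k + g k) = rsum n f + rsum n g.
Proof. induction n as [|n IH]; simpl; [ring | rewrite IH; ring]. Qed.

Lemma rsum_scal (n : nat) (c : R) (f : nat -> R) :
  rsum n (fun k => c * f k) = c * rsum n f.
Proof. induction n as [|n IH]; simpl; [ring | rewrite IH; ring]. Qed.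

Lemma rsum_swap (n m : nat) (F : nat -> nat -> R) :
  rsum n (fun i => rsum m (fun j => F i j)) = rsum m (fun j => rsum n (fun i => F i j)).
Proof.
  induction n as [|n IH]; simpl.
  - induction m as [|m IHm]; simpl; auto. rewrite <- IHm; ring.
  - rewrite IH, <- rsum_add. auto.
Qed.

Lemma rsum_continuity (n : nat) (F : nat -> R -> R) :
  (forall k, (k < n)%nat -> continuity (F k)) ->
  continuity (fun t => rsum n (fun k => F k t)).
Proof.
  induction n as [|n IH]; simpl; intros HF.
  - apply continuity_const. intros ? ?; auto.
  - apply (continuity_plus (fun t => rsum n (fun k => F k t)) (F n)).
    + apply IH; intros; apply HF; lia.
    + apply HF; lia.
Qed.

Lemma dot_ext (n : nat) (Bm : nat -> nat -> R) (u u' w w' : vec) :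
  (forall i, (i < n)%nat -> u i = u' i) ->
  (forall i, (i < n)%nat -> w i = w' i) -> dot n Bm u w = dot n Bm u' w'.
Proof.
  intros Hu Hw. unfold dot. apply rsum_ext; intros i Hi. apply rsum_ext; intros j Hj.
  rewrite Hu, Hw; auto.
Qed.

Lemma matvec_ext (n : nat) (M : nat -> nat -> R) (u u' : vec) (i : nat) :
  (forall j, (j < n)%nat -> u j = u' j) -> matvec n M u i = matvec n M u' i.
Proof. intros Hu. unfold matvec. apply rsum_ext. intros; rewrite Hu; auto. Qed.

Lemma matvec_sub (n : nat) (M : nat -> nat -> R) (u w : vec) (i : nat) :
  matvec n M (fun j => u j - w j) i = matvec n M u i - matvec n M w i.
Proof.
  unfold matvec, Rminus. rewrite <- (Rmult_1_l (rsum n (fun j => M i j * w j))).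
  rewrite Ropp_mult_distr_l, <- rsum_scal, <- rsum_add.
  apply rsum_ext; intros; ring.
Qed.

Lemma dot_continuity (n : nat) (Bm : nat -> nat -> R) (u w : R -> vec) :
  (forall i, (i < n)%nat -> continuity (fun t => u t i)) ->
  (forall i, (i < n)%nat -> continuity (fun t => w t i)) ->
  continuity (fun t => dot n Bm (u t) (w t)).
Proof.
  intros Hu Hw. unfold dot.
  apply (rsum_continuity n (fun i t => rsum n (fun j => Bm i j * u t i * w t j))).
  intros i Hi. apply (rsum_continuity n (fun j t => Bm i j * u t i * w t j)).
  intros j Hj. apply (continuity_mult (fun t => Bm i j * u t i) (fun t => w t j)); auto.
  apply (continuity_mult (fun t => Bm i j) (fun t => u t i)); auto.
  apply continuity_const. intros ? ?; auto.
Qed.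

Lemma dot_addl (n : nat) (Bm : nat -> nat -> R) (u u' w : vec) :
  dot n Bm (fun i => u i + u' i) w = dot n Bm u w + dot n Bm u' w.
Proof.
  unfold dot. rewrite <- rsum_add. apply rsum_ext; intros.
  rewrite <- rsum_add. apply rsum_ext; intros. ring.
Qed.

Lemma dot_addr (n : nat) (Bm : nat -> nat -> R) (u w w' : vec) :
  dot n Bm u (fun i => w i + w' i) = dot n Bm u w + dot n Bm u w'.
Proof.
  unfold dot. rewrite <- rsum_add. apply rsum_ext; intros.
  rewrite <- rsum_add. apply rsum_ext; intros. ring.
Qed.

Lemma dot_scall (n : nat) (Bm : nat -> nat -> R) (c : R) (u w : vec) :
  dot n Bm (fun i => c * u i) w = c * dot n Bm u w.
Proof.
  unfold dot. rewrite <- rsum_scal. apply rsum_ext; intros.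
  rewrite <- rsum_scal. apply rsum_ext; intros. ring.
Qed.

Lemma dot_subl (n : nat) (Bm : nat -> nat -> R) (u u' w : vec) :
  dot n Bm (fun i => u i - u' i) w = dot n Bm u w - dot n Bm u' w.
Proof.
  replace (fun i => u i - u' i) with (fun i => u i + (fun k => -1 * u' k) i)
    by (apply functional_extensionality; intro; ring).
  rewrite dot_addl, dot_scall. ring.
Qed.

Lemma dot_sym (n : nat) (Bm : nat -> nat -> R) (u w : vec) :
  (forall i j, (i < n)%nat -> (j < n)%nat -> Bm i j = Bm j i) ->
  dot n Bm u w = dot n Bm w u.
Proof.
  intros Hsym. unfold dot. rewrite rsum_swap. apply rsum_ext; intros.
  apply rsum_ext; intros. rewrite Hsym by auto. ring.
Qed.

Definition varpi_integrand (n : nat) (Bm : nat -> nat -> R) (xi zeta : R -> vec) : R -> R :=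
  fun t => dot n Bm (dcurve xi t) (zeta t).

Lemma smooth_curve_derivative (n : nat) (xi : R -> vec) : smooth_curve n xi ->
  forall i, (i < n)%nat ->
  (forall t, derivable_pt_lim (fun s => xi s i) t (dcurve xi t i)) /\
  continuity (fun t => dcurve xi t i) /\ continuity (fun t => xi t i).
Proof. intros Hxi i Hi. apply (smooth_derivative _ (Hxi i Hi)). Qed.

Lemma varpi_integrand_continuity (n : nat) (Bm : nat -> nat -> R) (xi zeta : R -> vec) :
  smooth_curve n xi -> smooth_curve n zeta -> continuity (varpi_integrand n Bm xi zeta).
Proof.
  intros Hxi Hzeta. apply dot_continuity.
  - intros i Hi; apply (smooth_curve_derivative n xi Hxi i Hi).
  - intros i Hi; apply (smooth_curve_derivative n zeta Hzeta i Hi).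
Qed.

Lemma varpi_integrand_double_speed (n : nat) (Bm : nat -> nat -> R)
  (z1 z2 x1 x2 : R -> vec) (a b d : R) :
  smooth_curve n x1 ->
  (forall t i, (i < n)%nat -> a <= t <= b -> z1 t i = x1 (2 * t + d) i) ->
  (forall t i, (i < n)%nat -> a <= t <= b -> z2 t i = x2 (2 * t + d) i) ->
  forall t, a < t < b ->
  varpi_integrand n Bm z1 z2 t = 2 * varpi_integrand n Bm x1 x2 (2 * t + d).
Proof.
  intros Hx1 Hz1 Hz2 t Ht. unfold varpi_integrand. rewrite <- dot_scall.
  apply dot_ext.
  - intros i Hi. unfold dcurve at 1. apply deriv_unique.
    apply (derivable_pt_lim_locally_ext (fun s => x1 (2 * s + d) i) _ t a b); auto.
    + intros s Hs. rewrite Hz1; auto; lra.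
    + rewrite Rmult_comm.
      apply (derivable_pt_lim_comp (fun s => 2 * s + d) (fun u => x1 u i)).
      * apply derivable_pt_lim_affine.
      * apply (smooth_curve_derivative n x1 Hx1 i Hi).
  - intros i Hi. apply Hz2; auto; lra.
Qed.

Lemma concat_integral_split (n : nat) (Bm : nat -> nat -> R)
  (z1 z2 x1_1 x1_2 x2_1 x2_2 : R -> vec) :
  smooth_curve n z1 -> smooth_curve n z2 ->
  smooth_curve n x1_1 -> smooth_curve n x1_2 ->
  smooth_curve n x2_1 -> smooth_curve n x2_2 ->
  (forall t i, (i < n)%nat -> 0 <= t <= / 2 -> z1 t i = x1_1 (2 * t) i) ->
  (forall t i, (i < n)%nat -> 0 <= t <= / 2 -> z2 t i = x1_2 (2 * t) i) ->
  (forall t i, (i < n)%nat -> / 2 <= t <= 1 -> z1 t i = x2_1 (2 * t - 1) i) ->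
  (forall t i, (i < n)%nat -> / 2 <= t <= 1 -> z2 t i = x2_2 (2 * t - 1) i) ->
  Rint (varpi_integrand n Bm z1 z2) 0 1 =
  Rint (varpi_integrand n Bm x1_1 x1_2) 0 1 + Rint (varpi_integrand n Bm x2_1 x2_2) 0 1.
Proof.
  intros Sz1 Sz2 S11 S12 S21 S22 Hz1a Hz2a Hz1b Hz2b.
  assert (Cz := varpi_integrand_continuity n Bm _ _ Sz1 Sz2).
  assert (C1 := varpi_integrand_continuity n Bm _ _ S11 S12).
  assert (C2 := varpi_integrand_continuity n Bm _ _ S21 S22).
  assert (RI : forall f a b, continuity f -> a <= b -> Riemann_integrable f a b).
  { intros f a b Cf hab. apply continuity_implies_RiemannInt; auto. }
  rewrite (Rint_RiemannInt _ _ _ (RI _ 0 1 Cz ltac:(lra))).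
  rewrite (Rint_RiemannInt _ _ _ (RI _ 0 1 C1 ltac:(lra))).
  rewrite (Rint_RiemannInt _ _ _ (RI _ 0 1 C2 ltac:(lra))).
  rewrite <- (@RiemannInt_P25 _ _ _ _
                (RI _ 0 (/ 2) Cz ltac:(lra)) (RI _ (/ 2) 1 Cz ltac:(lra))) by lra.
  f_equal.
  - rewrite (@RiemannInt_P18 _ _ _ _ _
      (RI _ 0 (/ 2) (continuity_affine_reparam _ 2 0 C1) ltac:(lra))).
    + apply RiemannInt_affine_subst; auto; lra.
    + lra.
    + apply (varpi_integrand_double_speed n Bm _ _ _ _ 0 (/ 2)); auto.
      all: intros; replace (2 * t + 0) with (2 * t) by ring; auto.
  - rewrite (@RiemannInt_P18 _ _ _ _ _
      (RI _ (/ 2) 1 (continuity_affine_reparam _ 2 (-1) C2) ltac:(lra))).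
    + apply RiemannInt_affine_subst; auto; lra.
    + lra.
    + apply (varpi_integrand_double_speed n Bm _ _ _ _ (/ 2) 1); auto.
      all: intros; replace (2 * t + -1) with (2 * t - 1) by ring; auto.
Qed.

Definition varpi_boundary (n : nat) (G : LieGroup n) (Bm : nat -> nat -> R) (g : G)
    (xi zeta : R -> vec) : R :=
  dot n Bm (matvec n (Ad G g) (xi 0)) (vxi n G g zeta)
  + / 2 * dot n Bm (vxi n G g xi) (vxi n G g zeta).

Lemma varpi_decomposition (n : nat) (G : LieGroup n) (Bm : nat -> nat -> R) (g : G)
    (xi zeta : R -> vec) :
  varpi n G Bm g xi zeta =
  Rint (varpi_integrand n Bm xi zeta) 0 1 - varpi_boundary n G Bm g xi zeta.
Proof. unfold varpi, varpi_boundary, varpi_integrand. ring. Qed.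

Lemma concat_at_0 (n : nat) (G : LieGroup n) (g2 g1 : G) (xi2 xi1 zeta : R -> vec) :
  is_concat n G g2 g1 xi2 xi1 zeta -> forall i, (i < n)%nat -> zeta 0 i = xi1 0 i.
Proof.
  intros (_ & _ & _ & _ & Hfirst & _) i Hi.
  rewrite Hfirst by (auto; lra). rewrite Rmult_0_r; auto.
Qed.

Lemma concat_at_1 (n : nat) (G : LieGroup n) (g2 g1 : G) (xi2 xi1 zeta : R -> vec) :
  is_concat n G g2 g1 xi2 xi1 zeta -> forall i, (i < n)%nat -> zeta 1 i = xi2 1 i.
Proof.
  intros (_ & _ & _ & _ & _ & Hsecond & _) i Hi.
  rewrite Hsecond by (auto; lra). replace (2 * 1 - 1) with 1 by ring; auto.
Qed.

Lemma concat_Ad_start (n : nat) (G : LieGroup n) (g2 g1 : G) (xi2 xi1 zeta : R -> vec) :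
  is_concat n G g2 g1 xi2 xi1 zeta -> forall i, (i < n)%nat ->
  matvec n (Ad G (gmul G g2 g1)) (zeta 0) i =
  matvec n (Ad G g2) (xi2 0) i - matvec n (Ad G g2) (vxi n G g1 xi1) i.
Proof.
  intros Hcat i Hi.
  assert (Hstart := concat_at_0 n G g2 g1 xi2 xi1 zeta Hcat).
  destruct Hcat as (_ & _ & Hcomp & _).
  rewrite Ad_mul, <- matvec_sub by auto.
  apply matvec_ext. intros j Hj. unfold vxi. rewrite <- Hcomp by auto.
  rewrite (matvec_ext n (Ad G g1) (zeta 0) (xi1 0)) by auto.
  ring.
Qed.

Lemma concat_vxi (n : nat) (G : LieGroup n) (g2 g1 : G) (xi2 xi1 zeta : R -> vec) :
  is_concat n G g2 g1 xi2 xi1 zeta -> forall i, (i < n)%nat ->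
  vxi n G (gmul G g2 g1) zeta i = vxi n G g2 xi2 i + matvec n (Ad G g2) (vxi n G g1 xi1) i.
Proof.
  intros Hcat i Hi. unfold vxi at 1.
  rewrite (concat_Ad_start n G g2 g1 xi2 xi1 zeta Hcat i Hi).
  rewrite (concat_at_1 n G g2 g1 xi2 xi1 zeta Hcat i Hi).
  unfold vxi. ring.
Qed.

(** Pairing theta^L with a vector is pairing theta^R with its Ad-image,
    because theta^R_g = Ad_g theta^L_g and the form is Ad-invariant. *)
Lemma thetaL_pairing (n : nat) (G : LieGroup n) (Bm : nat -> nat -> R)
  (HB : invariant_form n G Bm) (g : G) (X : Tan G g) (w : vec) :
  dot n Bm (thetaL G g X) w = dot n Bm (thetaR G g X) (matvec n (Ad G g) w).
Proof.
  destruct HB as [_ Hinv]. rewrite <- (Hinv g (thetaL G g X) w).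
  apply dot_ext; auto. intros i Hi. rewrite thetaR_Ad by auto. reflexivity.
Qed.

Lemma lam_anchor (n : nat) (G : LieGroup n) (Bm : nat -> nat -> R)
  (HB : invariant_form n G Bm) (g2 g1 : G) (xi2a xi1a xi2b xi1b : R -> vec)
  (X2a X2b : Tan G g2) (X1a X1b : Tan G g1) :
  is_anchor n G g2 xi2a X2a -> is_anchor n G g2 xi2b X2b ->
  is_anchor n G g1 xi1a X1a -> is_anchor n G g1 xi1b X1b ->
  lam n G Bm g2 g1 X2a X1a X2b X1b =
  / 2 * (dot n Bm (vxi n G g2 xi2a) (matvec n (Ad G g2) (vxi n G g1 xi1b))
         - dot n Bm (vxi n G g2 xi2b) (matvec n (Ad G g2) (vxi n G g1 xi1a))).
Proof.
  intros H2a H2b H1a H1b. unfold lam. rewrite !(thetaL_pairing n G Bm HB).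
  rewrite (dot_ext n Bm (thetaR G g2 X2a) (vxi n G g2 xi2a)
             (matvec n (Ad G g2) (thetaR G g1 X1b)) (matvec n (Ad G g2) (vxi n G g1 xi1b)));
    [ | auto | intros; apply matvec_ext; auto ].
  rewrite (dot_ext n Bm (thetaR G g2 X2b) (vxi n G g2 xi2b)
             (matvec n (Ad G g2) (thetaR G g1 X1a)) (matvec n (Ad G g2) (vxi n G g1 xi1a)));
    [ | auto | intros; apply matvec_ext; auto ].
  reflexivity.
Qed.

Lemma concat_boundary (n : nat) (G : LieGroup n) (Bm : nat -> nat -> R)
  (HB : invariant_form n G Bm) (g2 g1 : G)
  (xi2_1 xi1_1 xi2_2 xi1_2 zeta1 zeta2 : R -> vec)
  (H1 : is_concat n G g2 g1 xi2_1 xi1_1 zeta1)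
  (H2 : is_concat n G g2 g1 xi2_2 xi1_2 zeta2)
  (X2_1 X2_2 : Tan G g2) (X1_1 X1_2 : Tan G g1) :
  is_anchor n G g2 xi2_1 X2_1 -> is_anchor n G g2 xi2_2 X2_2 ->
  is_anchor n G g1 xi1_1 X1_1 -> is_anchor n G g1 xi1_2 X1_2 ->
  varpi_boundary n G Bm (gmul G g2 g1) zeta1 zeta2 =
  varpi_boundary n G Bm g2 xi2_1 xi2_2 + varpi_boundary n G Bm g1 xi1_1 xi1_2
  + lam n G Bm g2 g1 X2_1 X1_1 X2_2 X1_2.
Proof.
  intros HX2_1 HX2_2 HX1_1 HX1_2.
  rewrite (lam_anchor n G Bm HB g2 g1 xi2_1 xi1_1 xi2_2 xi1_2) by auto.
  destruct HB as [Hsym Hinv]. unfold varpi_boundary.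
  set (a := matvec n (Ad G g2) (xi2_1 0)).
  set (p1 := vxi n G g2 xi2_1). set (p2 := vxi n G g2 xi2_2).
  set (q1 := matvec n (Ad G g2) (vxi n G g1 xi1_1)).
  set (q2 := matvec n (Ad G g2) (vxi n G g1 xi1_2)).
  assert (Hstart : dot n Bm (matvec n (Ad G (gmul G g2 g1)) (zeta1 0))
                     (vxi n G (gmul G g2 g1) zeta2) =
                   dot n Bm (fun i => a i - q1 i) (fun i => p2 i + q2 i)).
  { apply dot_ext; intros i Hi.
    - apply (concat_Ad_start n G g2 g1 xi2_1 xi1_1 zeta1 H1 i Hi).
    - apply (concat_vxi n G g2 g1 xi2_2 xi1_2 zeta2 H2 i Hi). }
  assert (Hconst : dot n Bm (vxi n G (gmul G g2 g1) zeta1) (vxi n G (gmul G g2 g1) zeta2) =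
                   dot n Bm (fun i => p1 i + q1 i) (fun i => p2 i + q2 i)).
  { apply dot_ext; intros i Hi.
    - apply (concat_vxi n G g2 g1 xi2_1 xi1_1 zeta1 H1 i Hi).
    - apply (concat_vxi n G g2 g1 xi2_2 xi1_2 zeta2 H2 i Hi). }
  (* composability xi'(1) = xi''(0) gives Ad_g' xi'(0) = xi''(0) - v_xi' *)
  assert (Hstart1 : dot n Bm (matvec n (Ad G g1) (xi1_1 0)) (vxi n G g1 xi1_2) =
                    dot n Bm a q2 - dot n Bm q1 q2).
  { destruct H1 as (_ & _ & Hcomp & _).
    rewrite (dot_ext n Bm _ (fun i => xi2_1 0 i - vxi n G g1 xi1_1 i) _ (vxi n G g1 xi1_2));
      [ | intros i Hi; unfold vxi; rewrite <- Hcomp by auto; ring | auto ].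
    rewrite dot_subl, <- (Hinv g2 (xi2_1 0)), <- (Hinv g2 (vxi n G g1 xi1_1)).
    reflexivity. }
  assert (Hconst1 : dot n Bm (vxi n G g1 xi1_1) (vxi n G g1 xi1_2) = dot n Bm q1 q2)
    by (symmetry; apply Hinv).
  assert (Hswap : dot n Bm q1 p2 = dot n Bm p2 q1) by (apply dot_sym; auto).
  rewrite Hstart, Hconst, Hstart1, Hconst1, dot_subl, !dot_addl, !dot_addr.
  lra.
Qed.

Theorem proposition6p1 (n : nat) (G : LieGroup n) (Bm : nat -> nat -> R)
  (HB : invariant_form n G Bm) (g2 g1 : G)
  (xi2_1 xi1_1 xi2_2 xi1_2 zeta1 zeta2 : R -> vec)
  (H1 : is_concat n G g2 g1 xi2_1 xi1_1 zeta1)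
  (H2 : is_concat n G g2 g1 xi2_2 xi1_2 zeta2)
  (X2_1 X2_2 : Tan G g2) (X1_1 X1_2 : Tan G g1)
  (HX2_1 : is_anchor n G g2 xi2_1 X2_1) (HX2_2 : is_anchor n G g2 xi2_2 X2_2)
  (HX1_1 : is_anchor n G g1 xi1_1 X1_1) (HX1_2 : is_anchor n G g1 xi1_2 X1_2) :
  varpi n G Bm (gmul G g2 g1) zeta1 zeta2 =
  varpi n G Bm g2 xi2_1 xi2_2 + varpi n G Bm g1 xi1_1 xi1_2
  - lam n G Bm g2 g1 X2_1 X1_1 X2_2 X1_2.
Proof.
  rewrite !varpi_decomposition.
  rewrite (concat_boundary n G Bm HB g2 g1 xi2_1 xi1_1 xi2_2 xi1_2 zeta1 zeta2 H1 H2
             X2_1 X2_2 X1_1 X1_2 HX2_1 HX2_2 HX1_1 HX1_2).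
  destruct H1 as ([S2_1 _] & [S1_1 _] & _ & Sz1 & Hz1a & Hz1b & _).
  destruct H2 as ([S2_2 _] & [S1_2 _] & _ & Sz2 & Hz2a & Hz2b & _).
  rewrite (concat_integral_split n Bm zeta1 zeta2 xi1_1 xi1_2 xi2_1 xi2_2
             Sz1 Sz2 S1_1 S1_2 S2_1 S2_2 Hz1a Hz2a Hz1b Hz2b).
  ring.
Qed.
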